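(* Let $P$ be a finite poset, $\phi:P\to\mathbb{N}$ an isotone map and $\mathcal{J}(\phi)=\{\psi\in\mathrm{Hom}(P,\mathbb{N}):\psi\le\phi\}$. The inclusion-minimal elements of the family of sets $\{\Lambda\psi : \psi\in\mathrm{Hom}(P,\mathbb{N}),\ \psi\notin\mathcal{J}(\phi)\}$ are exactly the sets $\{(p_0,0),(p_1,1),\dots,(p_r,r)\}$ where $p_0\le p_1\le\dots\le p_r$ is a multichain in $P$, $\phi(p_r)=r$, and $\phi(p_i)>i$ for all $i<r$.
   Context: $\mathbb{N}=\{0,1,2,\dots\}$; $\mathrm{Hom}(P,\mathbb{N})$ is the set of isotone maps $P\to\mathbb{N}$, ordered by $\psi\le\phi$ iff $\psi(p)\le\phi(p)$ for all $p$. The ascent of $\psi$ is $\Lambda\psi=\{(p,i)\in P\times\mathbb{N}: \psi(q)\le i<\psi(p)\text{ for all } q<p\}$. *)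

From mathcomp Require Import all_boot all_order.
Set Implicit Arguments. Unset Strict Implicit. Unset Printing Implicit Defensive.
Import Order.TTheory.

Section AscentDefs.
Context {d : Order.disp_t} {P : porderType d}.

Definition isotone (f : P -> nat) : Prop :=
  forall x y : P, (x <= y)%O -> (f x <= f y)%N.

Definition fle (psi phi : P -> nat) : Prop := forall p : P, (psi p <= phi p)%N.

Definition ascent (psi : P -> nat) : P * nat -> Prop :=
  fun x => (forall q : P, (q < x.1)%O -> (psi q <= x.2)%N) /\ (x.2 < psi x.1)%N.

Definition ascent_family (phi : P -> nat) (S : P * nat -> Prop) : Prop :=
  exists psi : P -> nat, isotone psi /\ ~ fle psi phi /\ S = ascent psi.

Definition minimal_in (F : (P * nat -> Prop) -> Prop) (S : P * nat -> Prop) : Prop :=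
  F S /\ forall T, F T -> (forall x, T x -> S x) -> T = S.

End AscentDefs.

(* Write C(r, p) for the set {(p_0,0), ..., (p_r,r)} of a multichain p_0 <= ... <= p_r.
   Every ascent contains such a set coming from a *critical* multichain
   (phi (p_r) = r and i < phi (p_i) for i < r): pick a with phi a < psi a and phi a
   minimal, put r := phi a, and walk down from a, choosing for i = r, ..., 0 an element
   p_i <= p_(i+1) that is minimal with i < psi (p_i); the minimality of phi a forces the
   critical inequalities.  Conversely C(r, p) is itself the ascent of the isotone map
   q |-> max {i + 1 | p_i <= q}, which exceeds phi at p_r, and two critical sets C(r, p)
   are never properly nested. *)

From mathcomp Require Import all_boot all_order.
From Stdlib Require Import FunctionalExtensionality PropExtensionality.
Set Implicit Arguments. Unset Strict Implicit. Unset Printing Implicit Defensive.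
Import Order.TTheory.
Local Open Scope order_scope.

Lemma pred_ext (T : Type) (A B : T -> Prop) : (forall x, A x <-> B x) -> A = B.
Proof.
by move=> AB; apply: functional_extensionality => x; apply: propositional_extensionality.
Qed.

Section Ascents.
Context {d : Order.disp_t} {P : finPOrderType d}.
Implicit Types (phi psi : P -> nat) (p q : nat -> P) (r s i j : nat).

Lemma card_strict_down_lt (x y : P) :
  x < y -> (#|[set z | (z < x)%O]| < #|[set z | (z < y)%O]|)%N.
Proof.
move=> xy; apply/proper_card/properP; split.
  by apply/subsetP => z; rewrite !inE => /lt_trans; apply.
by exists x; rewrite !inE ?ltxx.
Qed.

(* A minimal element of {y <= x | i < psi y} lies in the ascent. *)
Lemma ascent_below psi x i : (i < psi x)%N -> exists2 y, y <= x & ascent psi (y, i).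
Proof.
move=> ix.
case: (@arg_minnP _ x (fun y => (y <= x) && (i < psi y)%N)
                       (fun y => #|[set z | (z < y)%O]|)); first by rewrite lexx.
move=> y /andP[yx iy] ymin; exists y => //; split => //= z zy.
rewrite leqNgt; apply/negP => iz.
have := ymin z; rewrite (le_trans (ltW zy) yx) iz => /(_ isT).
by rewrite leqNgt card_strict_down_lt.
Qed.

Definition multichain r p : Prop := forall i, (i < r)%N -> p i <= p i.+1.

Definition chain_set r p : P * nat -> Prop :=
  fun x => exists2 i, (i <= r)%N & x = (p i, i).

Definition critical_chain phi r p : Prop :=
  [/\ multichain r p, phi (p r) = r & forall i, (i < r)%N -> (i < phi (p i))%N].

Lemma multichain_le r p : multichain r p -> forall i j, (i <= j <= r)%N -> p i <= p j.
Proof.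
move=> pS i j /andP[ij jr].
have mono := @homo_leq_in _ [pred k | k <= r]%N p _ (@lexx _ P)
  (fun _ _ _ => @le_trans _ _ _ _ _).
apply: mono (ij) => //; last by rewrite inE (leq_trans ij jr).
- by move=> k l _ /[!inE] lr m /andP[_ /ltnW ml]; apply: leq_trans lr.
- by move=> k _ /[!inE] kr; apply: pS.
Qed.

Lemma ascent_multichain_below psi r x : (r < psi x)%N ->
  exists p, [/\ multichain r p, p r <= x & forall i, (i <= r)%N -> ascent psi (p i, i)].
Proof.
elim: r x => [|r IHr] x rx.
  have [y yx asc_y] := ascent_below rx.
  by exists (fun=> y); split => // -[].
have [y yx asc_y] := ascent_below rx.
have [_ ry] := asc_y.
have [p [pS pr asc_p]] := IHr y (ltnW ry).
exists (fun i => if (i <= r)%N then p i else y); split.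
- move=> i /=; rewrite ltnS => ir; rewrite ir; case: ltnP => [/pS //|ri].
  by have -> : i = r by apply/eqP; rewrite eqn_leq ir.
- by rewrite /= ltnn.
- move=> i /= iSr; case: leqP => [/asc_p //|ri].
  by have -> : i = r.+1 by apply/eqP; rewrite eqn_leq iSr.
Qed.

Lemma ascent_contains_critical_chain phi psi : isotone phi -> ~ fle psi phi ->
  exists r p, critical_chain phi r p /\ forall x, chain_set r p x -> ascent psi x.
Proof.
move=> iso_phi psi_phi.
have [a0 a0_bad] : exists a, (phi a < psi a)%N.
  case: (boolP [exists a, phi a < psi a]%N) => [/existsP[a ?]|/existsPn none_bad].
    by exists a.
  by case: psi_phi => a; rewrite leqNgt none_bad.
case: (@arg_minnP _ a0 (fun a => phi a < psi a)%N phi a0_bad) => a a_bad a_min.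
set r := phi a in a_min.
have [p [pS pr asc_p]] := ascent_multichain_below a_bad.
have r_le i : (i <= r)%N -> (phi (p i) <= i)%N -> (r <= phi (p i))%N.
  by move=> ir le_i; apply: a_min; apply: leq_ltn_trans le_i (asc_p i ir).2.
exists r, p; split => [|x [i ir ->]]; last exact: asc_p.
split=> // [|i ir].
  by apply/eqP; rewrite eqn_leq iso_phi //= r_le ?iso_phi.
rewrite ltnNge; apply/negP => le_i.
by have := r_le i (ltnW ir) le_i; rewrite leqNgt (leq_ltn_trans le_i ir).
Qed.

Definition chain_rank r p (x : P) : nat := \max_(i < r.+1 | p i <= x) i.+1.

Lemma chain_rank_isotone r p : isotone (chain_rank r p).
Proof.
move=> x y xy; apply/bigmax_leqP => i pix.
exact: (leq_bigmax_cond i (le_trans pix xy)).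
Qed.

Lemma chain_rank_le r p x : (chain_rank r p x <= r.+1)%N.
Proof. by apply/bigmax_leqP => i _; apply: ltn_ord. Qed.

Lemma ltn_chain_rank r p x i : multichain r p -> (i <= r)%N ->
  (i < chain_rank r p x)%N = (p i <= x).
Proof.
move=> pS ir; have ir' : (i < r.+1)%N by [].
apply/idP/idP => [|pix]; last exact: (leq_bigmax_cond (Ordinal ir')).
apply: contraLR => pix; rewrite -leqNgt; apply/bigmax_leqP => j pjx.
rewrite ltnNge; apply: contra pix => ij.
by apply: le_trans _ pjx; apply: (multichain_le pS); rewrite ij -ltnS ltn_ord.
Qed.

Lemma ascent_chain_rank r p : multichain r p -> ascent (chain_rank r p) = chain_set r p.
Proof.
move=> pS; apply: pred_ext => -[x i]; split => [[/= below i_lt]|[j jr [-> ->]]].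
  have ir : (i <= r)%N by rewrite -ltnS (leq_trans i_lt (chain_rank_le _ _ _)).
  have pix : p i <= x by rewrite -(ltn_chain_rank _ pS).
  exists i => //; congr pair; apply/eqP; rewrite eq_le pix andbT.
  apply: contraT => xpi; have /below : p i < x by rewrite lt_leAnge pix xpi.
  by rewrite leqNgt (ltn_chain_rank _ pS) ?lexx.
split=> /=; last by rewrite (ltn_chain_rank _ pS).
by move=> y ypj; rewrite leqNgt (ltn_chain_rank _ pS) // lt_geF.
Qed.

Lemma critical_chain_in_family phi r p :
  critical_chain phi r p -> ascent_family phi (chain_set r p).
Proof.
case=> pS phi_pr _; exists (chain_rank r p); split; first exact: chain_rank_isotone.
split; last by rewrite ascent_chain_rank.
by rewrite /fle => /(_ (p r)); rewrite phi_pr leqNgt (ltn_chain_rank _ pS) ?lexx.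
Qed.

(* (q s, s) lies on the larger chain, where phi (p s) > s unless s = r. *)
Lemma critical_chain_set_sub_eq phi s q r p :
  critical_chain phi s q -> critical_chain phi r p ->
  (forall x, chain_set s q x -> chain_set r p x) -> chain_set s q = chain_set r p.
Proof.
case=> _ phi_qs _ [_ _ phi_p] sub.
have on_p j : (j <= s)%N -> (j <= r)%N /\ q j = p j.
  by move=> js; have [i ir [-> ->]] := sub (q j, j) (ex_intro2 _ _ j js erefl).
have [sr qs] := on_p s (leqnn s).
have s_r : s = r.
  apply/eqP; rewrite eqn_leq sr leqNgt; apply/negP => /phi_p.
  by rewrite -qs phi_qs ltnn.
subst s; apply: pred_ext => x; split=> [/sub //|[i ir ->]].
by exists i; rewrite ?(on_p i ir).2.
Qed.

End Ascents.

Theorem proposition4p12 (d : Order.disp_t) (P : finPOrderType d)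
  (phi : P -> nat) (hphi : isotone phi) (S : P * nat -> Prop) :
  minimal_in (ascent_family phi) S <->
  exists (r : nat) (p : nat -> P),
    (forall i, (i < r)%N -> (p i <= p i.+1)%O) /\
    phi (p r) = r /\
    (forall i, (i < r)%N -> (i < phi (p i))%N) /\
    S = (fun x => exists2 i, (i <= r)%N & x = (p i, i)).
Proof.
split.
- move=> [[psi [_ [psi_phi S_psi]]] min_S]; subst S.
  have [r [p [crit sub]]] := ascent_contains_critical_chain hphi psi_phi.
  have [pS phi_pr phi_p] := crit.
  exists r, p; do !split => //.
  by rewrite -(min_S _ (critical_chain_in_family crit) sub).
- move=> [r [p [pS [phi_pr [phi_p S_chain]]]]]; subst S.
  have crit : critical_chain phi r p by [].
  split=> [|_ [psi [_ [psi_phi ->]]] sub]; first exact: critical_chain_in_family crit.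
  have [s [q [crit' sub']]] := ascent_contains_critical_chain hphi psi_phi.
  have eq_chains := critical_chain_set_sub_eq crit' crit (fun x => sub x \o sub' x).
  apply: pred_ext => x; split=> [/sub //|px].
  by apply: sub'; rewrite eq_chains.
Qed.
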